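(* Let $\mathcal K=(\mathcal T,\mathcal B)$ be a $\mathcal{BALC}$ knowledge base, $C,D$ $\mathcal{ALC}$ concepts, and $\kappa,\lambda$ contexts with $P_{\mathcal B}(\lambda)>0$. Then \[ P_{\mathcal K}((C\sqsubseteq D)^\kappa\mid\lambda)=\frac{P_{\mathcal K}((C\sqsubseteq D)^{\lambda\wedge\kappa})+P_{\mathcal B}(\lambda)-1}{P_{\mathcal B}(\lambda)}. \]
   Context: $V$ is a finite set of random variables, each with a finite value set; a world $\omega$ assigns a value to each variable. A Bayesian network $\mathcal B$ over $V$ defines $P_{\mathcal{B}}(\omega)=\prod_{X\in V}P(X=\omega(X)\mid \pi(X)=\omega(\pi(X)))$. A primitive context is a set of pairs $(X,x)$, $x$ a value of $X$; $\omega\models\kappa$ iff $\omega(X)=x$ for all $(X,x)\in\kappa$. A complex context is a finite nonempty set of primitive contexts, satisfied by $\omega$ iff $\omega$ satisfies one of them; $\phi\wedge\psi:=\{\kappa\cup\lambda\mid\kappa\in\phi,\lambda\in\psi\}$ (satisfied iff both are). $P_{\mathcal B}(\phi)=\sum_{\omega\models\phi}P_{\mathcal B}(\omega)$. $\mathcal T$ is a finite set of contextual GCIs. A $V$-interpretation $\mathcal{V}=(\Delta^{\mathcal V},\cdot^{\mathcal V},v^{\mathcal V})$ is an $\mathcal{ALC}$ interpretation plus a world; for an $\mathcal{ALC}$ axiom $\alpha$ and context $\phi$, $\mathcal V\models\alpha^\phi$ iff $v^{\mathcal V}\not\models\phi$ or the $\mathcal{ALC}$ interpretation satisfies $\alpha$.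 A probabilistic interpretation $\mathcal P=(\mathcal J,P_{\mathcal J})$ is a finite set of $V$-interpretations with a distribution assigning each positive probability; it is a model of $\mathcal K$ iff every member satisfies all axioms of $\mathcal T$ and $\sum_{\mathcal V\in\mathcal J,\,v^{\mathcal V}=\omega}P_{\mathcal J}(\mathcal V)=P_{\mathcal B}(\omega)$ for every world $\omega$. $P_{\mathcal P}((C\sqsubseteq D)^\phi)=\sum_{\mathcal V\in\mathcal J,\ \mathcal V\models(C\sqsubseteq D)^\phi}P_{\mathcal J}(\mathcal V)$ and $P_{\mathcal K}((C\sqsubseteq D)^\phi)=\inf_{\mathcal P\models\mathcal K}P_{\mathcal P}((C\sqsubseteq D)^\phi)$. For $P_{\mathcal B}(\lambda)>0$: $P_{\mathcal P}((C\sqsubseteq D)^\kappa\mid\lambda)=\frac{1}{P_{\mathcal B}(\lambda)}\sum_{\mathcal V\in\mathcal J,\ v^{\mathcal V}\models\lambda,\ \mathcal V\models(C\sqsubseteq D)^\kappa}P_{\mathcal J}(\mathcal V)$ and $P_{\mathcal K}((C\sqsubseteq D)^\kappa\mid\lambda)=\inf_{\mathcal P\models\mathcal K}P_{\mathcal P}((C\sqsubseteq D)^\kappa\mid\lambda)$. If $\mathcal K$ has no model, all these probabilities are defined to be $1$. *)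

From HB Require Import structures.
From mathcomp Require Import all_boot all_order all_algebra.
From mathcomp Require Import boolp classical_sets reals.
From Stdlib Require Lists.List.
Unset Printing Implicit Defensive.
Import Order.TTheory GRing.Theory Num.Theory.
Local Open Scope ring_scope.

Section BALC.
Variables (R : realType) (V : finType) (Val : V -> finType).
Variables (CN RN : Type).

Definition world := {dffun forall X : V, Val X}.

(** Primitive contexts: finite sets of pairs (X, x); complex contexts:
    finite sets of primitive contexts. *)
Definition pctx := seq {X : V & Val X}.
Definition cctx := seq pctx.

Definition psat (w : world) (k : pctx) : bool :=
  all (fun p => w (tag p) == tagged p) k.
Definition csat (w : world) (phi : cctx) : bool := has (psat w) phi.
Definition cand (phi psi : cctx) : cctx := [seq k ++ l | k <- phi, l <- psi].

(** Bayesian networks: a DAG (acyclicity witnessed by a rank function) with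
    conditional probability tables depending only on the parents' values. *)
Record BN := {
  par : V -> {set V};
  rk : V -> nat;
  rk_par : forall X Y, Y \in par X -> (rk Y < rk X)%N;
  cpt : forall X : V, world -> Val X -> R;
  cpt_par : forall X (w w' : world),
      (forall Y, Y \in par X -> w Y = w' Y) -> cpt X w = cpt X w';
  cpt_ge0 : forall X w x, 0 <= cpt X w x;
  cpt_sum1 : forall X w, \sum_(x : Val X) cpt X w x = 1 }.

Definition PBw (B : BN) (w : world) : R := \prod_(X : V) cpt B X w (w X).
Definition PB (B : BN) (phi : cctx) : R := \sum_(w : world | csat w phi) PBw B w.

Inductive concept :=
| CAtom of CN | CTop | CBot | CNot of concept
| CAnd of concept & concept | COr of concept & concept
| CEx of RN & concept | CAll of RN & concept.

Record vinterp := {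
  dom : Type;
  dom_inh : dom;
  cint : CN -> dom -> Prop;
  rint : RN -> dom -> dom -> Prop;
  wld : world }.

Fixpoint csem (I : vinterp) (C : concept) : dom I -> Prop :=
  match C with
  | CAtom A => cint I A
  | CTop => fun _ => True
  | CBot => fun _ => False
  | CNot C => fun x => ~ csem I C x
  | CAnd C D => fun x => csem I C x /\ csem I D x
  | COr C D => fun x => csem I C x \/ csem I D x
  | CEx r C => fun x => exists y, rint I r x y /\ csem I C y
  | CAll r C => fun x => forall y, rint I r x y -> csem I C y
  end.

Definition gci_holds (I : vinterp) (C D : concept) : Prop :=
  forall x, csem I C x -> csem I D x.

Record cgci := { lhs : concept; rhs : concept; ctx : cctx }.
Definition tbox := seq cgci.

Definition vsat (I : vinterp) (C D : concept) (phi : cctx) : Prop :=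
  ~~ csat (wld I) phi \/ gci_holds I C D.

Record pinterp := {
  pn : nat;
  pI : 'I_pn -> vinterp;
  pw : 'I_pn -> R;
  pw_gt0 : forall i, 0 < pw i;
  pw_sum1 : \sum_i pw i = 1 }.

Definition is_model (T : tbox) (B : BN) (P : pinterp) : Prop :=
  (forall i, forall a, Stdlib.Lists.List.In a T -> vsat (pI P i) (lhs a) (rhs a) (ctx a)) /\
  (forall w : world, \sum_(i | wld (pI P i) == w) pw P i = PBw B w).

Definition PP (P : pinterp) (C D : concept) (phi : cctx) : R :=
  \sum_(i | `[< vsat (pI P i) C D phi >]) pw P i.

Definition PPcond (B : BN) (P : pinterp) (C D : concept) (k l : pctx) : R :=
  (PB B [:: l])^-1 *
  \sum_(i | psat (wld (pI P i)) l && `[< vsat (pI P i) C D [:: k] >]) pw P i.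

Definition PK (T : tbox) (B : BN) (C D : concept) (phi : cctx) : R :=
  if pselect (exists P, is_model T B P)
  then inf [set r | exists P, is_model T B P /\ r = PP P C D phi]
  else 1.

Definition PKcond (T : tbox) (B : BN) (C D : concept) (k l : pctx) : R :=
  if pselect (exists P, is_model T B P)
  then inf [set r | exists P, is_model T B P /\ r = PPcond B P C D k l]
  else 1.

End BALC.

Arguments PB {R V Val} B phi.
Arguments PK {R V Val CN RN} T B C D phi.
Arguments PKcond {R V Val CN RN} T B C D k l.
Arguments cand {V Val} phi psi.
Arguments ctx {V Val CN RN} c.

(* In every model, the V-interpretations whose world falsifies lambda satisfy
   (C ⊑ D)^(lambda ∧ kappa) vacuously and carry total weight 1 - P_B(lambda),
   while those whose world satisfies lambda satisfy it iff they satisfy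
   (C ⊑ D)^kappa.  Hence, model by model,
     P((C ⊑ D)^(lambda ∧ kappa)) = 1 - P_B(lambda) + P_B(lambda) P((C ⊑ D)^kappa | lambda),
   so the conditional probability is an increasing affine function of the
   unconditional one, and infima commute with increasing affine bijections.
   Without models both sides equal 1. *)
From HB Require Import structures.
From mathcomp Require Import all_boot all_order all_algebra.
From mathcomp Require Import boolp classical_sets reals.
From mathcomp Require Import ring.
Import Order.TTheory GRing.Theory Num.Theory.
Local Open Scope ring_scope.
Local Open Scope classical_set_scope.

Arguments psat {V Val}.
Arguments csat {V Val}.
Arguments vsat {V Val CN RN}.
Arguments wld {V Val CN RN}.
Arguments pI {R V Val CN RN}.
Arguments pw {R V Val CN RN}.
Arguments pw_gt0 {R V Val CN RN}.
Arguments pw_sum1 {R V Val CN RN}.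
Arguments PBw {R V Val}.
Arguments is_model {R V Val CN RN}.
Arguments PP {R V Val CN RN}.
Arguments PPcond {R V Val CN RN}.

Section InfImage.
Variable R : realType.

Lemma inf_image_incr_bij (f g : R -> R) (S : set R) :
  {homo f : x y / x <= y} -> {homo g : x y / x <= y} ->
  cancel f g -> cancel g f -> S !=set0 -> has_lbound S ->
  inf (f @` S) = f (inf S).
Proof.
move=> f_incr g_incr fK gK [s Ss] [b Sb].
have fS0 : f @` S !=set0 by exists (f s), s.
apply/le_anti/andP; split; last first.
  apply: lb_le_inf => // _ [x Sx <-]; apply: f_incr.
  by apply: ge_inf => //; exists b.
have fSb : has_lbound (f @` S) by exists (f b) => _ [x Sx <-]; apply/f_incr/Sb.
rewrite -[X in X <= _]gK; apply: f_incr; apply: lb_le_inf; first by exists s.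
by move=> x Sx; rewrite -[x]fK; apply/g_incr/ge_inf => //; exists x.
Qed.

Lemma inf_image_affine (a b : R) (S : set R) :
  0 < a -> S !=set0 -> has_lbound S ->
  inf [set (x + b) / a | x in S] = (inf S + b) / a.
Proof.
move=> a_gt0; apply: (@inf_image_incr_bij _ (fun y => y * a - b)).
- by move=> x y xy; rewrite ler_pM2r ?invr_gt0 // lerD2r.
- by move=> x y xy; rewrite lerD2r ler_pM2r.
- by move=> x /=; rewrite divfK ?gt_eqF // addrK.
- by move=> y /=; rewrite subrK mulfK ?gt_eqF.
Qed.

End InfImage.

Section Contexts.
Context {V : finType} {Val : V -> finType}.

Lemma psat_cat (w : world V Val) (k l : pctx V Val) :
  psat w (k ++ l) = psat w k && psat w l.
Proof. exact: all_cat. Qed.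

Lemma csat1 (w : world V Val) (k : pctx V Val) : csat w [:: k] = psat w k.
Proof. by rewrite /csat /= orbF. Qed.

Lemma csat_cand (w : world V Val) (phi psi : cctx V Val) :
  csat w (cand phi psi) = csat w phi && csat w psi.
Proof.
apply/hasP/andP => [[_ /allpairsP[[k l] [/= kphi lpsi ->]]]|].
  by rewrite psat_cat => /andP[wk wl]; split; apply/hasP; [exists k | exists l].
case=> /hasP[k kphi wk] /hasP[l lpsi wl]; exists (k ++ l).
  by apply/allpairsP; exists (k, l).
by rewrite psat_cat wk wl.
Qed.

Lemma vsat_cand {CN RN : Type} (I : vinterp V Val CN RN) (C D : concept CN RN)
    (phi psi : cctx V Val) :
  vsat I C D (cand phi psi) <-> (csat (wld I) phi -> vsat I C D psi).
Proof.
rewrite /vsat csat_cand; case: (csat _ phi) => /=.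
  by split=> [vsat_psi _ | /(_ isT)].
by split=> // _; left.
Qed.

End Contexts.

Section WorldMarginals.
Context {R : realType} {V : finType} {Val : V -> finType} {CN RN : Type}.
Context {B : BN R V Val} {P : pinterp R V Val CN RN}.
Hypothesis PB_marginal :
  forall w, \sum_(i | wld (pI P i) == w) pw P i = PBw B w.

Lemma sum_pw_csat (phi : cctx V Val) :
  \sum_(i | csat (wld (pI P i)) phi) pw P i = PB B phi.
Proof.
rewrite /PB (partition_big (fun i => wld (pI P i)) (csat ^~ phi)) //=.
apply: eq_bigr => w wphi; rewrite -PB_marginal; apply: eq_bigl => i.
by case: eqP => [->|]; rewrite ?wphi ?andbF.
Qed.

Lemma sum_pw_ncsat (phi : cctx V Val) :
  \sum_(i | ~~ csat (wld (pI P i)) phi) pw P i = 1 - PB B phi.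
Proof.
by rewrite -(pw_sum1 P) [in RHS](bigID (fun i => csat (wld (pI P i)) phi)) /=
  sum_pw_csat addrC addrK.
Qed.

Lemma PP_cand (C D : concept CN RN) (phi psi : cctx V Val) :
  PP P C D (cand phi psi) = 1 - PB B phi +
    \sum_(i | csat (wld (pI P i)) phi && `[< vsat (pI P i) C D psi >]) pw P i.
Proof.
rewrite /PP (bigID (fun i => csat (wld (pI P i)) phi)) /= addrC -sum_pw_ncsat.
congr (_ + _); apply: eq_bigl => i; have := vsat_cand (pI P i) C D phi psi;
  case: (csat _ phi) => vsatE /=; rewrite ?andbT ?andbF //.
  by apply/asboolP/vsatE.
by apply: asbool_equiv_eq; split=> [/vsatE/(_ isT) | /(fun h _ => h)/vsatE].
Qed.

Lemma PPcond_PP (C D : concept CN RN) (kappa lambda : pctx V Val) :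
  PPcond B P C D kappa lambda =
  (PP P C D (cand [:: lambda] [:: kappa]) + PB B [:: lambda] - 1)
    / PB B [:: lambda].
Proof.
rewrite PP_cand /PPcond mulrC; under eq_bigl => i do rewrite -csat1.
by congr (_ * _); ring.
Qed.

Lemma PP_ge0 (C D : concept CN RN) (phi : cctx V Val) : 0 <= PP P C D phi.
Proof. by apply: sumr_ge0 => i _; apply/ltW/pw_gt0. Qed.

End WorldMarginals.

Theorem mainTheorem11 (R : realType) (V : finType) (Val : V -> finType)
  (CN RN : Type) (T : tbox V Val CN RN) (B : BN R V Val)
  (C D : concept CN RN) (kappa lambda : pctx V Val) :
  all (fun a => ctx a != [::]) T ->
  0 < PB B [:: lambda] ->
  PKcond T B C D kappa lambda =
  (PK T B C D (cand [:: lambda] [:: kappa]) + PB B [:: lambda] - 1)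
    / PB B [:: lambda].
Proof.
move=> _ p_gt0; set p := PB B [:: lambda].
rewrite /PKcond /PK.
destruct (pselect (exists P, is_model T B P)) as [model_ex|]; last first.
  by rewrite (addrC 1) addrK divff ?gt_eqF.
set S := [set r | exists P, is_model T B P /\
                   r = PP P C D (cand [:: lambda] [:: kappa])].
have -> : [set r | exists P, is_model T B P /\ r = PPcond B P C D kappa lambda]
          = [set (x + (p - 1)) / p | x in S].
  apply/seteqP; split=> r.
    move=> [P [P_model ->]]; exists (PP P C D (cand [:: lambda] [:: kappa])).
      by exists P.
    by rewrite (PPcond_PP P_model.2) addrA.
  move=> [_ [P [P_model ->]] <-]; exists P.
  by rewrite (PPcond_PP P_model.2) addrA.
rewrite inf_image_affine ?addrA //.
  case: model_ex => P P_model.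
  by exists (PP P C D (cand [:: lambda] [:: kappa])), P.
by exists 0 => _ [P [_ ->]]; apply: PP_ge0.
Qed.
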